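(* Let $T\subseteq V_n$ with $|T|$ even, and let $V_n = U_1\cup U_2$ be a partition with $|T\cap U_1|$ and $|T\cap U_2|$ odd. Fix $t_1\in T\cap U_1$, $t_2\in T\cap U_2$, and set $V_i := U_i\setminus\{t_i\}$, $T_i := (T\cap U_i)\setminus\{t_i\}$ for $i=1,2$, and $F := (V_1:V_2)\cup(V_1:\{t_1,t_2\})\cup(V_2:\{t_1,t_2\})$. Then $$Q := \{x\in \operatorname{dom}(P_{T\text{-join}}(n)) : x(U_1:U_2)=1,\ x_e=0\ \forall e\in F\}$$ is a face of $\{x\in \operatorname{dom}(P_{T\text{-join}}(n)) : x(U_1:U_2)=1\}$ and equals the set of $x\in\mathbb{R}^{E_n}_+$ with $x_{\{t_1,t_2\}}=1$, $x_e=0$ for all $e\in F$, and $x(S_i:(V_i\setminus S_i))\ge 1$ for all $i\in\{1,2\}$ and all $S_i\subseteq V_i$ with $|T_i\cap S_i|$ odd. Consequently $Q$ is (up to coordinate permutation) the Cartesian product of the $T_1$-join polyhedron of the complete graph on $V_1$, the $T_2$-join polyhedron of the complete graph on $V_2$, and a single point.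
   Context: $K_n=(V_n,E_n)$ is the complete graph on $n$ nodes. For $A,B\subseteq V_n$, $A:B := \{\{a,b\} : a\in A, b\in B\}$, and $x(F')=\sum_{e\in F'}x_e$. For $T\subseteq V_n$ with $|T|$ even, a $T$-join is a set $J\subseteq E_n$ such that a node has odd degree in $(V_n,J)$ iff it lies in $T$; $P_{T\text{-join}}(n)$ is the convex hull of characteristic vectors of $T$-joins and $\operatorname{dom}(P_{T\text{-join}}(n)) = P_{T\text{-join}}(n)+\mathbb{R}^{E_n}_+ = \{x\in\mathbb{R}^{E_n}_+ : x(\delta(S))\ge 1 \text{ for all } S\subseteq V_n \text{ with } |S\cap T| \text{ odd}\}$, where $\delta(S)=S:(V_n\setminus S)$. The $T'$-join polyhedron of a complete graph on a node set $W$ with $T'\subseteq W$ is defined analogously. *)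

From HB Require Import structures.
From mathcomp Require Import all_boot all_order all_algebra.
Set Implicit Arguments. Unset Strict Implicit. Unset Printing Implicit Defensive.
Import Order.TTheory GRing.Theory Num.Theory.
Local Open Scope ring_scope.

(* Nodes of K_n are 'I_n; edges are the 2-element subsets of 'I_n. *)
Definition edge (n : nat) := {e : {set 'I_n} | #|e| == 2%N}.

Definition cut (n : nat) (A B : {set 'I_n}) : {set edge n} :=
  [set e : edge n | [exists a in A, exists b in B, val e == [set a; b]]].

Definition xsum (R : realFieldType) (n : nat) (x : edge n -> R) (F : {set edge n}) : R :=
  \sum_(e in F) x e.

(* dom(P_{T'-join}) of the complete graph on the node set W (subset of V_n),
   given by its defining system: x >= 0 on the edges of K_W and
   x(S:(W\S)) >= 1 for all S subset W with |S cap T'| odd.  Only coordinates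
   on edges inside W are constrained (the vector lives in R^{E(W)}).
   For W = V_n this is dom(P_{T-join}(n)). *)
Definition dom_TJ (R : realFieldType) (n : nat) (W T : {set 'I_n}) (x : edge n -> R) : Prop :=
  (forall e : edge n, val e \subset W -> 0 <= x e) /\
  (forall S : {set 'I_n}, S \subset W -> odd #|S :&: T| ->
     1 <= xsum x (cut S (W :\: S))).

Definition is_face (I : finType) (R : realFieldType) (P Q : (I -> R) -> Prop) : Prop :=
  exists (c : I -> R) (d : R),
    (forall x, P x -> \sum_i c i * x i <= d) /\
    (forall x, Q x <-> (P x /\ \sum_i c i * x i = d)).

(* On the face x(F) = 0 of {x in dom(P_T-join) : x(U1:U2) = 1}, the only edge of U1:U2
   that can carry weight is t1t2, so it has weight 1.  For S inside V_i, every edge of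
   delta(S) leaving V_i lies in F, so delta(S) and S:(V_i\S) have the same weight: this
   gives the T_i-join cut constraints.  Conversely, if |S cap T| is odd then either S
   separates t1 from t2, and delta(S) contains t1t2, or |S cap T_i| is odd for some i,
   and delta(S) contains (S cap V_i):(V_i\S).  Since every edge lies inside V1, inside V2,
   in F, or is t1t2, the face is the product of the two T_i-join polyhedra and a point. *)

From HB Require Import structures.
From mathcomp Require Import all_boot all_order all_algebra.
Import Order.TTheory GRing.Theory Num.Theory.
Set Implicit Arguments. Unset Strict Implicit.
Local Open Scope ring_scope.

Lemma eq_set2 (T : finType) (a b c d : T) : a != b ->
  ([set a; b] == [set c; d]) = (a == c) && (b == d) || (a == d) && (b == c).
Proof.
move=> ab; apply/eqP/idP; last first.
  by case/orP=> /andP[/eqP-> /eqP->] //; rewrite setUC.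
move=> E; move: ab.
have : a \in [set c; d] by rewrite -E set21.
have : b \in [set c; d] by rewrite -E set22.
by rewrite !inE => /pred2P[]-> /pred2P[]->; rewrite !eqxx ?orbT.
Qed.

Section Cuts.
Variable n : nat.
Implicit Types (a b : 'I_n) (A B S W : {set 'I_n}) (e : edge n).

Lemma card_set2 a b : a != b -> #|[set a; b]| == 2.
Proof. by rewrite cards2 => ->. Qed.

Definition edge2 a b (ab : a != b) : edge n := exist _ [set a; b] (card_set2 ab).

Lemma edgeP e : exists a b, a != b /\ val e = [set a; b].
Proof. by apply/cards2P; case: e. Qed.

Lemma mem_cut A B e a b : a != b -> val e = [set a; b] ->
  (e \in cut A B) = (a \in A) && (b \in B) || (b \in A) && (a \in B).
Proof.
move=> ab eE; rewrite inE eE; apply/existsP/idP.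
  case=> c /andP[cA /existsP[d /andP[dB]]].
  by rewrite eq_set2 // => /orP[]/andP[/eqP-> /eqP->]; rewrite cA dB ?orbT.
case/orP=> /andP[aA bB]; [exists a | exists b]; rewrite aA /=; apply/existsP.
  by exists b; rewrite bB eqxx.
by exists a; rewrite bB setUC eqxx.
Qed.

Lemma cutSS A A' B B' : A \subset A' -> B \subset B' -> cut A B \subset cut A' B'.
Proof.
move=> /subsetP sA /subsetP sB; apply/subsetP => e.
rewrite !inE => /existsP[a /andP[aA /existsP[b /andP[bB eE]]]].
by apply/existsP; exists a; rewrite sA //=; apply/existsP; exists b; rewrite sB.
Qed.

Lemma cut_subset_boundary S W : S \subset W ->
  cut S (~: S) \subset cut S (W :\: S) :|: cut W (~: W).
Proof.
move=> /subsetP SW; apply/subsetP => e; have [a [b [ab eE]]] := edgeP e.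
rewrite in_setU !(mem_cut _ _ ab eE) !inE.
move: (SW a) (SW b).
by case: (a \in S); case: (b \in S); case: (a \in W); case: (b \in W) => //= ->.
Qed.

End Cuts.

Section XSum.
Variables (R : realFieldType) (n : nat) (x : edge n -> R).
Hypothesis x_ge0 : forall e, 0 <= x e.
Implicit Types (A B F : {set edge n}) (e : edge n).

Lemma xsum_le_subsetU A B F : (forall e, e \in F -> x e = 0) ->
  A \subset B :|: F -> xsum x A <= xsum x B.
Proof.
move=> xF /subsetP AB; rewrite /xsum (big_mkcond [in A]) (big_mkcond [in B]).
apply: ler_sum => e _; case: ifPn => eA; case: ifPn => eB //.
by move/AB: eA; rewrite in_setU (negPf eB) => /xF ->.
Qed.

Lemma xsum_le_subset A B : A \subset B -> xsum x A <= xsum x B.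
Proof. by move=> AB; apply: (@xsum_le_subsetU _ _ set0) => [e|]; rewrite ?inE ?setU0. Qed.

Lemma xsum_set1 e : xsum x [set e] = x e.
Proof. by rewrite /xsum big_set1. Qed.

Lemma le_xsum_mem e A : e \in A -> x e <= xsum x A.
Proof. by move=> eA; rewrite -xsum_set1; apply: xsum_le_subset; rewrite sub1set. Qed.

Lemma xsum_subset1 e A F : (forall e, e \in F -> x e = 0) ->
  e \in A -> A \subset e |: F -> xsum x A = x e.
Proof.
move=> xF eA AeF; apply/eqP; rewrite eq_le le_xsum_mem // andbT.
by rewrite -xsum_set1; apply: xsum_le_subsetU xF AeF.
Qed.

End XSum.

Lemma is_face_zero_set (I : finType) (R : realFieldType) (P : (I -> R) -> Prop) (F : {set I}) :
  (forall x, P x -> forall i, 0 <= x i) ->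
  is_face P (fun x => P x /\ forall i, i \in F -> x i = 0).
Proof.
move=> P_ge0; exists (fun i => if i \in F then -1 else 0), 0.
have sumE (x : I -> R) : \sum_i (if i \in F then -1 else 0) * x i = - \sum_(i in F) x i.
  rewrite -sumrN (big_mkcond [in F]); apply: eq_bigr => i _.
  by case: (i \in F); rewrite ?mulN1r ?mul0r ?oppr0.
split=> [x Px | x]; first by rewrite sumE oppr_le0 sumr_ge0 // => i _; apply: P_ge0.
rewrite sumE; split=> [[Px xF] | [Px /eqP]]; first by rewrite big1 ?oppr0.
rewrite oppr_eq0 => /eqP xF0; split=> // i.
by apply: (psumr_eq0P _ xF0) => j _; apply: P_ge0.
Qed.

Section DomRestriction.
Variables (R : realFieldType) (n : nat) (W T : {set 'I_n}) (x : edge n -> R).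

Lemma dom_TJ_restrict : (forall e, e \in cut W (~: W) -> x e = 0) ->
  dom_TJ setT T x -> dom_TJ W (T :&: W) x.
Proof.
move=> xW [dom_ge0 x_cut]; have x_ge0 e : 0 <= x e by apply/dom_ge0/subsetT.
split=> [e _ | S SW oS]; first exact: x_ge0.
apply: le_trans (x_cut S (subsetT S) _) _.
  by rewrite setIA [S :&: T]setIC -setIA (setIidPl SW) setIC in oS.
by rewrite setTD; apply: (xsum_le_subsetU x_ge0 xW); apply: cut_subset_boundary.
Qed.

Lemma dom_TJ_cut S : (forall e, 0 <= x e) -> T \subset W -> dom_TJ W T x ->
  odd #|S :&: T| -> 1 <= xsum x (cut S (~: S)).
Proof.
move=> x_ge0 TW [_ x_cut] oS.
have SWT : S :&: W :&: T = S :&: T by rewrite -setIA (setIidPr TW).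
apply: le_trans (x_cut _ (subsetIr S W) _) _; first by rewrite SWT.
apply: (xsum_le_subset x_ge0); apply: cutSS; first exact: subsetIl.
by rewrite setDIr setDv setU0 setDE subsetIr.
Qed.

End DomRestriction.

Section Contraction.
Variables (R : realFieldType) (n : nat) (T U : {set 'I_n}) (t1 t2 : 'I_n).
Hypotheses (t1TU : t1 \in T :&: U) (t2TU : t2 \in T :&: ~: U).
Implicit Types (S : {set 'I_n}) (e : edge n) (x : edge n -> R).

Local Notation V1 := (U :\ t1).
Local Notation V2 := (~: U :\ t2).
Local Notation T1 := ((T :&: U) :\ t1).
Local Notation T2 := ((T :&: ~: U) :\ t2).
Local Notation F := (cut V1 V2 :|: cut V1 [set t1; t2] :|: cut V2 [set t1; t2]).

Let t1U : t1 \in U. Proof. by case/setIP: t1TU. Qed.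
Let t2U : (t2 \in U) = false. Proof. by case/setIP: t2TU => _; rewrite inE => /negPf. Qed.

Lemma t1_neq_t2 : t1 != t2.
Proof. by apply: contraTneq t1U => ->; rewrite t2U. Qed.

Let t12 : (t1 == t2) = false. Proof. exact: negPf t1_neq_t2. Qed.
Let t21 : (t2 == t1) = false. Proof. by rewrite eq_sym t12. Qed.

Local Notation e12 := (edge2 t1_neq_t2).

Ltac vertex_cases v :=
  case: (eqVneq v t1) => [->|_]; [|case: (eqVneq v t2) => [->|_]].
Ltac by_vertex_cases a b :=
  vertex_cases a; vertex_cases b; rewrite ?eqxx ?t12 ?t21 ?t1U ?t2U /=;
  by case: (a \in U); case: (b \in U).

Lemma edges_cover e :
  [|| val e \subset V1, val e \subset V2, e \in F | val e == [set t1; t2]].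
Proof.
have [a [b [ab eE]]] := edgeP e.
rewrite !in_setU !(mem_cut _ _ ab eE) eE !subUset !sub1set eq_set2 // !inE; move: ab.
by_vertex_cases a b.
Qed.

Lemma cut_U_subset : cut U (~: U) \subset e12 |: F.
Proof.
apply/subsetP => e; have [a [b [ab eE]]] := edgeP e.
rewrite !in_setU in_set1 -val_eqE eE /= eq_set2 // !(mem_cut _ _ ab eE) !inE.
move: ab; by_vertex_cases a b.
Qed.

Lemma cut_V1_boundary : cut V1 (~: V1) \subset F.
Proof.
apply/subsetP => e; have [a [b [ab eE]]] := edgeP e.
rewrite !in_setU !(mem_cut _ _ ab eE) !inE; move: ab; by_vertex_cases a b.
Qed.

Lemma cut_V2_boundary : cut V2 (~: V2) \subset F.
Proof.
apply/subsetP => e; have [a [b [ab eE]]] := edgeP e.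
rewrite !in_setU !(mem_cut _ _ ab eE) !inE; move: ab; by_vertex_cases a b.
Qed.

Lemma e12_in_cut S : (t1 \in S) != (t2 \in S) -> e12 \in cut S (~: S).
Proof.
rewrite (@mem_cut _ _ _ e12 _ _ t1_neq_t2 erefl) !inE.
by case: (t1 \in S); case: (t2 \in S).
Qed.

Lemma card_setIT_split S :
  #|S :&: T| = ((t1 \in S) + #|S :&: T1| + ((t2 \in S) + #|S :&: T2|))%N.
Proof.
rewrite -(cardsID U (S :&: T)) setDE -!setIA (cardsD1 t1) (cardsD1 t2 (S :&: _)).
by rewrite !(in_setI _ S) t1TU t2TU !andbT !setIDA.
Qed.

Lemma odd_setIT S : odd #|S :&: T| ->
  (t1 \in S) != (t2 \in S) \/ odd #|S :&: T1| \/ odd #|S :&: T2|.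
Proof.
rewrite card_setIT_split addnACA !oddD.
by case: (t1 \in S); case: (t2 \in S); case: (odd _); case: (odd _); auto.
Qed.

Lemma T1_sub_V1 : T1 \subset V1. Proof. exact/setSD/subsetIr. Qed.
Lemma T2_sub_V2 : T2 \subset V2. Proof. exact/setSD/subsetIr. Qed.

Lemma dom_TJ_sides_ge0 x : dom_TJ V1 T1 x -> dom_TJ V2 T2 x ->
  (forall e, val e = [set t1; t2] -> x e = 1) -> (forall e, e \in F -> x e = 0) ->
  forall e, 0 <= x e.
Proof.
move=> [x1 _] [x2 _] x12 xF e.
by case/or4P: (edges_cover e) => [/x1 | /x2 | /xF -> | /eqP/x12 ->].
Qed.

Lemma face_iff_dom_TJ_sides x :
  (dom_TJ setT T x /\ xsum x (cut U (~: U)) = 1) /\ (forall e, e \in F -> x e = 0) <->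
  [/\ dom_TJ V1 T1 x, dom_TJ V2 T2 x,
      forall e, val e = [set t1; t2] -> x e = 1
    & forall e, e \in F -> x e = 0].
Proof.
split=> [[[dom xU] xF] | [dom1 dom2 x12 xF]].
  have x_ge0 e : 0 <= x e by apply/dom.1/subsetT.
  split=> //.
  - rewrite -setIDA; apply: dom_TJ_restrict dom => e /(subsetP cut_V1_boundary).
    exact: xF.
  - rewrite -setIDA; apply: dom_TJ_restrict dom => e /(subsetP cut_V2_boundary).
    exact: xF.
  - move=> e eE; have -> : e = e12 by apply: val_inj.
    by rewrite -xU (xsum_subset1 x_ge0 xF (e12_in_cut _) cut_U_subset) // t1U t2U.
have x_ge0 := dom_TJ_sides_ge0 dom1 dom2 x12 xF.
have x_e12 : x e12 = 1 by apply: x12.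
split=> //; split.
  2: by rewrite (xsum_subset1 x_ge0 xF (e12_in_cut _) cut_U_subset) // t1U t2U.
split=> [e _ | S _ /odd_setIT[sep | [odd1 | odd2]]]; first exact: x_ge0.
all: rewrite setTD.
- by rewrite -x_e12; apply: (le_xsum_mem x_ge0); apply: e12_in_cut.
- exact: dom_TJ_cut x_ge0 T1_sub_V1 dom1 odd1.
- exact: dom_TJ_cut x_ge0 T2_sub_V2 dom2 odd2.
Qed.

Lemma dom_TJ_sides_iff_cuts x :
  [/\ dom_TJ V1 T1 x, dom_TJ V2 T2 x,
      forall e, val e = [set t1; t2] -> x e = 1
    & forall e, e \in F -> x e = 0] <->
  [/\ forall e, 0 <= x e,
      forall e, val e = [set t1; t2] -> x e = 1,
      forall e, e \in F -> x e = 0,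
      forall S, S \subset V1 -> odd #|T1 :&: S| -> 1 <= xsum x (cut S (V1 :\: S))
    & forall S, S \subset V2 -> odd #|T2 :&: S| -> 1 <= xsum x (cut S (V2 :\: S))].
Proof.
split=> [[dom1 dom2 x12 xF] | [x_ge0 x12 xF c1 c2]].
  split=> // [|S SV|S SV]; rewrite 1?setIC.
  - exact: dom_TJ_sides_ge0.
  - exact: dom1.2.
  - exact: dom2.2.
by split=> //; split=> // S SV; rewrite setIC; [apply: c1 | apply: c2].
Qed.

End Contraction.

Theorem mainTheorem9 (R : realFieldType) (n : nat) (T U1 U2 : {set 'I_n}) (t1 t2 : 'I_n) :
  ~~ odd #|T| ->
  U1 :&: U2 = set0 -> U1 :|: U2 = setT ->
  odd #|T :&: U1| -> odd #|T :&: U2| ->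
  t1 \in T :&: U1 -> t2 \in T :&: U2 ->
  let V1 := U1 :\ t1 in
  let V2 := U2 :\ t2 in
  let T1 := (T :&: U1) :\ t1 in
  let T2 := (T :&: U2) :\ t2 in
  let F := cut V1 V2 :|: cut V1 [set t1; t2] :|: cut V2 [set t1; t2] in
  let P' := fun x : edge n -> R => dom_TJ setT T x /\ xsum x (cut U1 U2) = 1 in
  let Q := fun x : edge n -> R => P' x /\ (forall e, e \in F -> x e = 0) in
  is_face P' Q /\
  (forall x : edge n -> R, Q x <->
     [/\ (forall e, 0 <= x e),
         (forall e : edge n, val e = [set t1; t2] -> x e = 1),
         (forall e, e \in F -> x e = 0),
         (forall S : {set 'I_n}, S \subset V1 -> odd #|T1 :&: S| -> 1 <= xsum x (cut S (V1 :\: S)))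
       & (forall S : {set 'I_n}, S \subset V2 -> odd #|T2 :&: S| -> 1 <= xsum x (cut S (V2 :\: S)))]) /\
  (forall x : edge n -> R, Q x <->
     [/\ dom_TJ V1 T1 x, dom_TJ V2 T2 x,
         (forall e : edge n, val e = [set t1; t2] -> x e = 1)
       & (forall e, e \in F -> x e = 0)]) /\
  (forall e : edge n,
     [|| val e \subset V1, val e \subset V2, e \in F | val e == [set t1; t2]]).
Proof.
(* The parity hypotheses only make |T1| and |T2| even; the description of Q holds without them. *)
move=> _ U12_0 U12_T _ _ t1TU t2TU V1 V2 T1 T2 F P' Q.
have U2E : U2 = ~: U1.
  rewrite -setTD -U12_T setDUl setDv set0U; apply/esym/setDidPl.
  by rewrite disjoint_sym -setI_eq0 U12_0.
subst U2.
have QE x : Q x <-> _ := face_iff_dom_TJ_sides t1TU t2TU x.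
split; first by apply: is_face_zero_set => x [[x_ge0 _] _] e; apply/x_ge0/subsetT.
split; first by move=> x; apply: iff_trans (QE x) (dom_TJ_sides_iff_cuts _ _ x).
by split; [exact: QE | exact: edges_cover t1TU t2TU].
Qed.
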